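(* Let $\mathcal C$ be an irredundant 3-SAT formula. (a) If $u,v,w,a$ are distinct variables with $\bar u v w\in\mathcal C$, then at most one of the clauses $auv$, $avw$ belongs to $\mathcal C$. (b) If $u,a,b,c$ are distinct variables with $uab\in\mathcal C$ and $\bar u ac\in\mathcal C$, then $abc\notin\mathcal C$.
   Context: A clause is a conjunction of three literals on three distinct variables, written as juxtaposition (e.g. $\bar u vw=\bar u\wedge v\wedge w$); a formula is a nonempty set of clauses. $\mathcal C$ is irredundant if every $C\in\mathcal C$ has a witness: an assignment satisfying $C$ and no other clause of $\mathcal C$. *)

From mathcomp Require Import all_boot.
Set Implicit Arguments. Unset Strict Implicit. Unset Printing Implicit Defensive.

(* A literal over variables V: (x, true) is x, (x, false) is the negation of x. *)
Definition lit (V : finType) := (V * bool)%type.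

Definition pos (V : finType) (x : V) : lit V := (x, true).
Definition neg (V : finType) (x : V) : lit V := (x, false).

(* A clause is a conjunction of three literals on three distinct variables,
   represented as the set of its literals. *)
Definition is_clause (V : finType) (C : {set lit V}) : Prop :=
  #|C| = 3 /\ #|[set l.1 | l in C]| = 3.

Definition cl (V : finType) (l1 l2 l3 : lit V) : {set lit V} := [set l1; l2; l3].

Definition is_formula (V : finType) (F : {set {set lit V}}) : Prop :=
  F != set0 /\ forall C, C \in F -> is_clause C.

Definition sat (V : finType) (a : V -> bool) (C : {set lit V}) : Prop :=
  forall l, l \in C -> a l.1 = l.2.

Definition witness (V : finType) (F : {set {set lit V}}) (C : {set lit V})
  (a : V -> bool) : Prop :=
  sat a C /\ forall D, D \in F -> D <> C -> ~ sat a D.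

Definition irredundant (V : finType) (F : {set {set lit V}}) : Prop :=
  forall C, C \in F -> exists a : V -> bool, witness F C a.

From mathcomp Require Import all_boot.
Set Implicit Arguments. Unset Strict Implicit.

(* Take a witness f of the all-positive clause
   in question.  Whatever value f gives to u, it satisfies one of the two other
   clauses, which contain u and its negation respectively; by the witness
   property that clause must coincide with the first one, and a literal present
   in one but not the other rules this out. *)

Section Witness.

Variable V : finType.
Implicit Types (F : {set {set lit V}}) (C D E : {set lit V}) (f : V -> bool).

Lemma sat_cl f (l1 l2 l3 : lit V) :
  f l1.1 = l1.2 -> f l2.1 = l2.2 -> f l3.1 = l3.2 -> sat f (cl l1 l2 l3).
Proof. by move=> h1 h2 h3 l; rewrite !inE -orbA => /or3P [] /eqP ->. Qed.

Lemma sat_clP f (l1 l2 l3 : lit V) :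
  sat f (cl l1 l2 l3) -> [/\ f l1.1 = l1.2, f l2.1 = l2.2 & f l3.1 = l3.2].
Proof. by move=> hs; split; apply: hs; rewrite !inE eqxx ?orbT. Qed.

Lemma witness_sat_eq F C D f : witness F C f -> D \in F -> sat f D -> D = C.
Proof. by case=> _ hn DF hs; case: (D =P C) => // /(hn _ DF). Qed.

Lemma witness_resolve F C D E f (u : V) :
  witness F C f -> D \in F -> E \in F ->
  (f u -> sat f D) -> (~~ f u -> sat f E) -> D = C \/ E = C.
Proof.
move=> wC DF EF sat1 sat2.
case: (boolP (f u)) => [/sat1 | /sat2].
  by move/(witness_sat_eq wC DF); left.
by move/(witness_sat_eq wC EF); right.
Qed.

Lemma cl_neq C D (l : lit V) : l \in C -> l \notin D -> D <> C.
Proof. by move=> lC lD DC; rewrite DC lC in lD. Qed.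

Lemma notin_cl (l l1 l2 l3 : lit V) :
  l.1 != l1.1 -> l.1 != l2.1 -> l.1 != l3.1 -> l \notin cl l1 l2 l3.
Proof.
move=> n1 n2 n3; rewrite !inE -orbA; apply/or3P.
by case=> /eqP E; rewrite E eqxx in n1 n2 n3.
Qed.

End Witness.

Theorem mainTheorem7 (V : finType) (F : {set {set lit V}})
  (hF : is_formula F) (hirr : irredundant F) :
  (forall u v w a : V, uniq [:: u; v; w; a] ->
     cl (neg u) (pos v) (pos w) \in F ->
     ~ (cl (pos a) (pos u) (pos v) \in F /\ cl (pos a) (pos v) (pos w) \in F))
  /\
  (forall u a b c : V, uniq [:: u; a; b; c] ->
     cl (pos u) (pos a) (pos b) \in F ->
     cl (neg u) (pos a) (pos c) \in F ->
     cl (pos a) (pos b) (pos c) \notin F).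
Proof.
split.
- move=> u v w a /= + uvwF [auvF avwF].
  rewrite !inE !negb_or => /and4P [/and3P [_ uw ua] /andP [vw va] wa _].
  have [f w_avw] := hirr _ avwF.
  have [/= fa fv fw] := sat_clP w_avw.1.
  have [] := witness_resolve (u := u) w_avw auvF uvwF.
  + by move=> fu; apply: sat_cl.
  + by move=> /negbTE fu; apply: sat_cl.
  + apply: (cl_neq (l := pos w)); first by rewrite !inE eqxx ?orbT.
    by apply: notin_cl; rewrite //= eq_sym.
  + apply: (cl_neq (l := pos a)); first by rewrite !inE eqxx ?orbT.
    by apply: notin_cl; rewrite //= eq_sym.
- move=> u a b c /= + uabF uacF.
  rewrite !inE !negb_or => /and4P [/and3P [_ ub uc] /andP [ab ac] bc _].
  apply/negP => abcF.
  have [f w_abc] := hirr _ abcF.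
  have [/= fa fb fc] := sat_clP w_abc.1.
  have [] := witness_resolve (u := u) w_abc uabF uacF.
  + by move=> fu; apply: sat_cl.
  + by move=> /negbTE fu; apply: sat_cl.
  + apply: (cl_neq (l := pos c)); first by rewrite !inE eqxx ?orbT.
    by apply: notin_cl; rewrite //= eq_sym.
  + apply: (cl_neq (l := pos b)); first by rewrite !inE eqxx ?orbT.
    by apply: notin_cl; rewrite //= eq_sym.
Qed.
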